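(* Let $\mathcal{A}=\{a_1<\dots<a_k\}$ be a finite ordered alphabet and let $T$ be an interval exchange transformation on $[\ell,r)$ over $\mathcal{A}$ with permutation $\pi\in S_{\mathcal{A}}$. Then every return word in the language of $T$ is $\pi$-clustering for $\mathcal{A}$; that is, for every $w\in\mathcal{L}(T)$ and every $u\in\mathcal{R}(w)$, the word $u$ is $\pi$-clustering for $\mathcal{A}$.
   Context: An interval is a left-closed right-open real interval. A $k$-IET $T$ on $I=[\ell,r)$ over $\mathcal{A}$ is given by a partition of $I$ into intervals $(I_a)_{a\in\mathcal{A}}$ of positive length, with $I_a$ to the left of $I_b$ whenever $a<b$, together with a permutation $\pi$ of $\mathcal{A}$; it is defined by $T(x)=x+\tau_a$ for $x\in I_a$, where $\tau_a=\sum_{b:\,\pi^{-1}(b)<\pi^{-1}(a)}|I_b|-\sum_{b<a}|I_b|$ (so the image intervals $T(I_{\pi(a_1)}),\dots,T(I_{\pi(a_k)})$ appear from left to right). No minimality or regularity is assumed. The trajectory of $x\in I$ is the infinite word $\Omega_T(x)=w_0w_1w_2\cdots$ with $w_i=a$ iff $T^i(x)\in I_a$. The language $\mathcal{L}(T)$ is the set of all finite factors of all trajectories $\Omega_T(x)$, $x\in I$. For $w\in\mathcal{L}(T)$, the set of (left) return words is $\mathcal{R}(w)=\{u\in\mathcal{A}^*: uw\in(\mathcal{L}(T)\cap w\mathcal{A}^* )\setminus \mathcal{A}^+w\mathcal{A}^+\}$. For a word $v$ of length $n$ over $\mathcal{A}$, its Burrows–Wheeler transform $\mathrm{bwt}_{\mathcal{A}}(v)$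 is the word formed by the last letters of the $n$ cyclic rotations (conjugates) of $v$, listed in lexicographic order with respect to the order of $\mathcal{A}$. A word $v$ is $\pi$-clustering for $\mathcal{A}$ if $\mathrm{bwt}_{\mathcal{A}}(v)=\pi(a_1)^{k_1}\pi(a_2)^{k_2}\cdots\pi(a_k)^{k_k}$ where $k_i=|v|_{\pi(a_i)}$ is the number of occurrences of $\pi(a_i)$ in $v$. *)

From HB Require Import structures.
From mathcomp Require Import all_boot all_order all_algebra all_fingroup.
From mathcomp Require Import reals.
Set Implicit Arguments. Unset Strict Implicit. Unset Printing Implicit Defensive.
Import Order.TTheory GRing.Theory Num.Theory.

(* The ordered alphabet A = {a_1 < ... < a_k} is 'I_k, ordered by the
   natural order of ordinals; a_i is the (i-1)-th ordinal. *)

Section IET.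
Local Open Scope ring_scope.
Variables (R : realType) (k : nat) (l : R) (lam : 'I_k -> R) (pi : {perm 'I_k}).

Definition iet_left (a : 'I_k) : R := l + \sum_(b < k | (b < a)%N) lam b.

Definition iet_in (a : 'I_k) (x : R) : bool :=
  (iet_left a <= x) && (x < iet_left a + lam a).

Definition iet_tau (a : 'I_k) : R :=
  \sum_(b < k | ((pi^-1)%g b < (pi^-1)%g a)%N) lam b
  - \sum_(b < k | (b < a)%N) lam b.

(* the letter coding x (None if x lies in no I_a, i.e. x outside I) *)
Definition iet_letter (x : R) : option 'I_k := [pick a | iet_in a x].

Definition iet_map (x : R) : R :=
  match iet_letter x with Some a => x + iet_tau a | None => x end.

End IET.

Section Lang.
Local Open Scope ring_scope.
Variables (R : realType) (k : nat) (l r : R) (lam : 'I_k -> R) (pi : {perm 'I_k}).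

Definition iet_language (w : seq 'I_k) : Prop :=
  exists x : R, l <= x < r /\ exists n : nat,
    [seq iet_letter l lam (iter (n + i) (iet_map l lam pi) x) | i <- iota 0 (size w)]
    = map Some w.

(* (left) return words of w *)
Definition iet_return_word (w u : seq 'I_k) : Prop :=
  iet_language (u ++ w) /\ prefix w (u ++ w) /\
  ~ (exists p s : seq 'I_k, (0 < size p)%N /\ (0 < size s)%N /\ u ++ w = p ++ w ++ s).
End Lang.

Fixpoint lexle (k : nat) (s t : seq 'I_k) : bool :=
  match s, t with
  | [::], _ => true
  | _ :: _, [::] => false
  | a :: s', b :: t' => ((a < b)%N || ((a == b) && lexle s' t'))
  end.

Definition bwt (k : nat) (v : seq 'I_k) : seq 'I_k :=
  pmap (fun c => ohead (rev c))
       (sort (@lexle k) [seq rot i v | i <- iota 0 (size v)]).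

Definition pi_clustering (k : nat) (pi : {perm 'I_k}) (v : seq 'I_k) : Prop :=
  bwt v = flatten [seq nseq (count_mem (pi i) v) (pi i) | i <- enum 'I_k].

(* Let the orbit segment y_0, y_1, ... of T be coded by u ++ w.  As w is a
   prefix of u ++ w, this word is |u|-periodic, so the rotation of u starting
   at position p in [1, |u|] is read along the orbit of y_p, and its last
   letter is the letter of y_(p-1).  T places the images of the intervals in
   the order given by pi, so if pi^-1 of the last letter of the p-th rotation
   is smaller than that of the q-th one, then y_p < y_q.  While the codings of
   y_p and y_q agree, both points are translated by the same amount, hence at
   their first disagreement the smaller point carries the smaller letter; this
   disagreement comes before |u| steps because w has no inner occurrence in
   u ++ w.  Thus sorting the rotations of u lexicographically sorts their last
   letters by pi^-1, which is the pi-clustering of u. *)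

From HB Require Import structures.
From mathcomp Require Import all_boot all_order all_algebra all_fingroup.
From mathcomp Require Import reals.
From mathcomp Require Import zify lra.
Import Order.TTheory GRing.Theory Num.Theory.

Set Implicit Arguments.
Unset Strict Implicit.
Unset Printing Implicit Defensive.

Lemma lexle_total k : total (@lexle k).
Proof.
elim=> [|a s IH] [|b t] //=.
case: (ltngtP a b) => [//|ba|/val_inj ->]; first by rewrite orbT.
by rewrite eqxx IH.
Qed.

Lemma lexle_first_mismatch k (x0 : 'I_k) (s1 s2 : seq 'I_k) t :
  t < size s1 -> t < size s2 ->
  (forall q, q < t -> nth x0 s1 q = nth x0 s2 q) ->
  nth x0 s1 t < nth x0 s2 t -> ~~ lexle s2 s1.
Proof.
elim: t s1 s2 => [|t IH] [|a s1] [|b s2] //= Ht1 Ht2 Heq Hlt.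
  by rewrite ltnNge (ltnW Hlt) /= -val_eqE /= eq_sym (ltn_eqF Hlt).
have -> : a = b := Heq 0 isT.
rewrite ltnn eqxx /=.
by apply: IH => // q Hq; apply: (Heq q.+1).
Qed.

Definition rotations (T : Type) (v : seq T) := [seq rot i v | i <- iota 0 (size v)].

Lemma nth_rot (T : Type) (x0 : T) (s : seq T) p t :
  p <= size s -> t < size s -> nth x0 (rot p s) t = nth x0 s ((p + t) %% size s).
Proof.
rewrite leq_eqVlt => /orP[/eqP-> | Hp] Ht.
  by rewrite rot_size addnC modnDr modn_small.
rewrite /rot nth_cat size_drop; case: ltnP => Hpt.
  by rewrite nth_drop modn_small //; lia.
rewrite nth_take; last lia.
have -> : p + t = t - (size s - p) + size s by lia.
by rewrite modnDr modn_small //; lia.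
Qed.

Lemma mem_rotations (T : eqType) (v : seq T) c :
  c \in rotations v -> exists2 p, 0 < p <= size v & c = rot p v.
Proof.
case/mapP=> i; rewrite mem_iota add0n => /andP[_ Hi] ->.
case: (posnP i) => [-> | i0]; last by exists i => //; rewrite i0 ltnW.
by exists (size v); rewrite ?rot0 ?rot_size ?leqnn ?andbT //; lia.
Qed.

Lemma perm_last_rotations (T : eqType) (x0 : T) (v : seq T) :
  perm_eq (map (last x0) (rotations v)) v.
Proof.
case: (posnP (size v)) => [/size0nil -> // | v0].
suff -> : map (last x0) (rotations v) = rot (size v).-1 v by rewrite perm_rot.
apply: (@eq_from_nth _ x0); rewrite !size_map size_iota ?size_rot // => i Hi.
rewrite /rotations -map_comp (nth_map 0) ?size_iota // nth_iota //= -nth_last size_rot.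
by rewrite !nth_rot 1?addnC //; lia.
Qed.

Lemma bwt_last k (x0 : 'I_k) (v : seq 'I_k) :
  bwt v = map (last x0) (sort (@lexle k) (rotations v)).
Proof.
rewrite /bwt -/(rotations v).
have : all (fun c => c != [::]) (sort (@lexle k) (rotations v)).
  apply/allP => c; rewrite mem_sort => /mem_rotations[p Hp ->].
  by rewrite -size_eq0 size_rot -lt0n; case/andP: Hp; apply: leq_trans.
elim: (sort _ _) => //= c S IH /andP[]; case/lastP: c => // c a _ /IH->.
by rewrite rev_rcons last_rcons.
Qed.

Lemma pi_clustering_nil k (pi : {perm 'I_k}) : pi_clustering pi [::].
Proof. by rewrite /pi_clustering /bwt /=; elim: (enum 'I_k). Qed.

Section Clustering.
Variables (k : nat) (pi : {perm 'I_k}).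

Definition pi_le : rel 'I_k := fun a b => (pi^-1)%g a <= (pi^-1)%g b.

Lemma pi_le_trans : transitive pi_le.
Proof. by move=> a b c; apply: leq_trans. Qed.

Lemma pi_le_anti : antisymmetric pi_le.
Proof.
move=> a b /andP[ab ba]; apply: (perm_inj (s := (pi^-1)%g)); apply: val_inj.
by apply/eqP; rewrite eqn_leq; apply/andP.
Qed.

Definition pi_clustered (u : seq 'I_k) :=
  flatten [seq nseq (count_mem (pi i) u) (pi i) | i <- enum 'I_k].

Lemma perm_pi_clustered u : perm_eq (pi_clustered u) u.
Proof.
apply/seq.permP => P; rewrite count_flatten -map_comp sumnE big_map big_enum /=.
under eq_bigr do rewrite /= count_nseq.
rewrite (reindex_inj (@perm_inj _ (pi^-1)%g)) /=.
under eq_bigr do rewrite permKV.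
elim: u => [|a u IH] /=; first by rewrite big1 // => i _; rewrite muln0.
rewrite -IH; under eq_bigr do rewrite mulnDr.
rewrite big_split /= (bigD1 a) //= eqxx muln1 big1 ?addn0 // => i ne.
by rewrite eq_sym (negPf ne) muln0.
Qed.

Lemma sorted_pi_clustered u : sorted pi_le (pi_clustered u).
Proof.
rewrite sorted_pairwise; last exact: pi_le_trans.
have : pairwise (relpre val ltn) (enum 'I_k).
  by rewrite -pairwise_map val_enum_ord -sorted_pairwise ?iota_ltn_sorted //; apply: ltn_trans.
rewrite /pi_clustered; elim: (enum 'I_k) => //= i s IH /andP[Hi Hs].
rewrite pairwise_cat IH // andbT; apply/andP; split.
  apply/allrelP => _ _ /nseqP[-> _] /flattenP[_ /mapP[j js ->] /nseqP[-> _]].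
  by rewrite /pi_le !permK ltnW //; apply: (allP Hi).
by elim: (count_mem _ _) => //= n ->; rewrite andbT all_nseq /pi_le leqnn orbT.
Qed.

(* Rotations are indexed by [p] in [1, size u], [rot (size u) u = u] replacing
   [rot 0 u], so that inside [u ++ w] each is preceded by the letter at [p.-1]. *)
Lemma pi_clustering_of_rotations (u : seq 'I_k) (x0 : 'I_k) :
  (forall p q, 0 < p <= size u -> 0 < q <= size u ->
     (pi^-1)%g (last x0 (rot p u)) < (pi^-1)%g (last x0 (rot q u)) ->
     ~~ lexle (rot q u) (rot p u)) ->
  pi_clustering pi u.
Proof.
move=> Hrot; rewrite /pi_clustering (bwt_last x0) -/(pi_clustered u).
apply: (sorted_eq pi_le_trans pi_le_anti).
- apply: (homo_sorted_in (P := mem (rotations u))); last exact: sort_sorted (@lexle_total k) _.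
    move=> _ _ /mem_rotations[p Hp ->] /mem_rotations[q Hq ->].
    by apply: contraTT; rewrite /pi_le -ltnNge; apply: Hrot.
  by apply/allP => c; rewrite mem_sort.
- exact: sorted_pi_clustered.
- rewrite perm_sym (perm_trans (perm_pi_clustered u)) // perm_sym.
  by rewrite (perm_trans _ (perm_last_rotations x0 u)) // perm_map // perm_sort.
Qed.

End Clustering.

Section ReturnWord.
Variables (T : eqType) (x0 : T) (u w : seq T).
Hypothesis w_prefix : prefix w (u ++ w).
Hypothesis no_inner_w : ~ exists p s : seq T,
  0 < size p /\ 0 < size s /\ u ++ w = p ++ w ++ s.

Local Notation v := (u ++ w).
Local Notation n := (size u).

Lemma nth_return_period t : t + n < size v -> nth x0 v (t + n) = nth x0 v t.
Proof.
move=> tv; have tw : t < size w by rewrite size_cat in tv; lia.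
case/prefixP: w_prefix => s vE.
by rewrite nth_cat ltnNge leq_addl /= addnK vE nth_cat tw.
Qed.

Lemma nth_return_mod q : 0 < n -> q < size v -> nth x0 v q = nth x0 u (q %% n).
Proof.
move=> n0; elim/ltn_ind: q => q IH qv; case: (ltnP q n) => qn.
  by rewrite nth_cat qn modn_small.
have -> : q = q - n + n by rewrite subnK.
by rewrite nth_return_period ?modnDr ?IH //; lia.
Qed.

Lemma nth_rot_return p t : 0 < p <= n -> t < n -> p + t < size v ->
  nth x0 (rot p u) t = nth x0 v (p + t).
Proof.
by move=> /andP[p0 pn] tn ptv; rewrite nth_rot // nth_return_mod //; lia.
Qed.

Lemma last_rot_return p : 0 < p <= n -> last x0 (rot p u) = nth x0 v p.-1.
Proof.
move=> /andP[p0 pn]; have n0 : 0 < n by apply: leq_trans pn.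
rewrite -nth_last size_rot nth_rot ?nth_return_mod ?size_cat; try lia.
have -> : p + n.-1 = p.-1 + n by lia.
by rewrite modnDr.
Qed.

Lemma return_no_inner_occurrence e : 0 < e < n ->
  ~ (forall r, r < size w -> nth x0 v (e + r) = nth x0 w r).
Proof.
move=> /andP[e0 en] occ; apply: no_inner_w.
have ev : e + size w <= size v by rewrite size_cat; lia.
exists (take e v), (drop (e + size w) v).
split; first by rewrite size_takel //; apply: leq_trans ev; apply: leq_addr.
split; first by rewrite size_drop size_cat; lia.
rewrite -{1}(cat_take_drop e v); congr (_ ++ _).
rewrite -{1}(cat_take_drop (size w) (drop e v)) drop_drop addnC; congr (_ ++ _).
have sw : size (take (size w) (drop e v)) = size w.
  by rewrite size_takel // size_drop; lia.
apply: (@eq_from_nth _ x0) => // r; rewrite sw => rw.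
by rewrite nth_take // nth_drop occ.
Qed.

Lemma return_mismatch p q : 0 < p <= n -> 0 < q <= n -> p != q ->
  exists t, [&& p + t < size v, q + t < size v & nth x0 v (p + t) != nth x0 v (q + t)].
Proof.
wlog pq : p q / p < q => [Hwlog Hp Hq|/andP[p0 pn] /andP[q0 qn] _].
  rewrite neq_ltn => /orP[pq|qp]; first exact: Hwlog Hp Hq (negbT (ltn_eqF pq)).
  have [t /and3P[pt qt ne]] := Hwlog q p qp Hq Hp (negbT (ltn_eqF qp)).
  by exists t; rewrite pt qt eq_sym ne.
set P := fun t => [&& p + t < size v, q + t < size v & nth x0 v (p + t) != nth x0 v (q + t)].
suff /hasP[t _ Pt] : has P (iota 0 (size v)) by exists t.
apply/negPn/negP => /hasPn none.
apply: (@return_no_inner_occurrence (p + n - q)); first lia.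
move=> r rw; have /none : n - q + r \in iota 0 (size v) by rewrite mem_iota size_cat; lia.
rewrite /P size_cat.
have -> : q + (n - q + r) = n + r by lia.
have -> : nth x0 v (n + r) = nth x0 w r by rewrite nth_cat ltnNge leq_addr addKn.
have -> : p + n - q + r = p + (n - q + r) by lia.
have -> : p + (n - q + r) < n + size w by lia.
by rewrite ltn_add2l rw negbK => /eqP.
Qed.

Lemma return_first_mismatch p q : 0 < p <= n -> 0 < q <= n ->
  nth x0 v p.-1 != nth x0 v q.-1 ->
  exists t, [/\ t < n, p + t < size v, q + t < size v,
    forall s, s < t -> nth x0 v (p + s) = nth x0 v (q + s) &
    nth x0 v (p + t) != nth x0 v (q + t)].
Proof.
move=> Hp Hq ne; have pq : p != q by apply: contraNneq ne => ->.
have [t /and3P[pt qt ne_t] tmin] := ex_minnP (return_mismatch Hp Hq pq).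
have agree s : s < t -> nth x0 v (p + s) = nth x0 v (q + s).
  move=> st; have ps : p + s < size v by apply: leq_ltn_trans pt; rewrite leq_add2l ltnW.
  have qs : q + s < size v by apply: leq_ltn_trans qt; rewrite leq_add2l ltnW.
  apply/eqP; apply: contraTT st => ne_s; rewrite -leqNgt tmin //.
  by rewrite ps qs ne_s.
exists t; split=> //; rewrite ltnNge; apply: contra ne => nt.
case/andP: Hp Hq => p0 pn /andP[q0 qn].
rewrite -(nth_return_period (t := p.-1)) -?(nth_return_period (t := q.-1)); try lia.
have -> : p.-1 + n = p + n.-1 by lia.
have -> : q.-1 + n = q + n.-1 by lia.
by rewrite agree //; lia.
Qed.

End ReturnWord.

Local Open Scope ring_scope.

Lemma ler_sum_subpred (R : numDomainType) (I : finType) (F : I -> R) (P Q : pred I) b :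
  (forall i, 0 <= F i) -> subpred P Q -> Q b -> ~~ P b ->
  \sum_(i | P i) F i + F b <= \sum_(i | Q i) F i.
Proof.
move=> F0 PQ Qb Pb; rewrite (bigID P Q) /=.
have -> : \sum_(i | Q i && P i) F i = \sum_(i | P i) F i.
  by apply: eq_bigl => i; case Pi: (P i); rewrite ?andbT ?andbF ?PQ.
by rewrite lerD2l (bigD1 b) ?Qb //= lerDl sumr_ge0.
Qed.

Section IntervalExchange.
Variables (R : realType) (k : nat) (l : R) (lam : 'I_k -> R) (pi : {perm 'I_k}).
Hypothesis lam_gt0 : forall a, 0 < lam a.

Let lam_ge0 a : 0 <= lam a. Proof. exact: ltW. Qed.

Lemma iet_in_letter_le a b x x' :
  iet_in l lam a x -> iet_in l lam b x' -> x < x' -> (a <= b)%N.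
Proof.
rewrite /iet_in /iet_left => /andP[ax _] /andP[_ bx'] xx'.
rewrite leqNgt; apply/negP => ba.
have := @ler_sum_subpred _ _ lam (fun c : 'I_k => (c < b)%N) (fun c => (c < a)%N) b.
move=> /(_ lam_ge0 (fun c cb => ltn_trans cb ba) ba (negbT (ltnn _))); lra.
Qed.

Lemma iet_image_lt c d x x' :
  iet_in l lam c x -> iet_in l lam d x' -> ((pi^-1)%g c < (pi^-1)%g d)%N ->
  x + iet_tau lam pi c < x' + iet_tau lam pi d.
Proof.
rewrite /iet_in /iet_left /iet_tau => /andP[_ cx] /andP[dx' _] cd.
have := @ler_sum_subpred _ _ lam (fun b => (pi^-1)%g b < (pi^-1)%g c)%N
  (fun b => (pi^-1)%g b < (pi^-1)%g d)%N c.
move=> /(_ lam_ge0 (fun b bc => ltn_trans bc cd) cd (negbT (ltnn _))); lra.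
Qed.

Section Orbit.
Variables (y : nat -> R) (W : nat -> 'I_k) (N : nat).
Hypothesis y_succ : forall i, y i.+1 = iet_map l lam pi (y i).
Hypothesis y_letter : forall i, (i < N)%N -> iet_letter l lam (y i) = Some (W i).

Lemma orbit_in i : (i < N)%N -> iet_in l lam (W i) (y i).
Proof. by move/y_letter; rewrite /iet_letter; case: pickP => // a Ha [<-]. Qed.

Lemma orbit_step i : (i < N)%N -> y i.+1 = y i + iet_tau lam pi (W i).
Proof. by move=> iN; rewrite y_succ /iet_map y_letter. Qed.

Lemma orbit_gap i j t : (i + t <= N)%N -> (j + t <= N)%N ->
  (forall s, s < t -> W (i + s) = W (j + s))%N ->
  y (i + t) - y (j + t) = y i - y j.
Proof.
elim: t => [|t IH] it jt agree; first by rewrite !addn0.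
rewrite !addnS in it jt *; rewrite !orbit_step ?(agree t) //.
have := IH (ltnW it) (ltnW jt) (fun s st => agree s (ltnW st)); lra.
Qed.

Lemma orbit_letter_le i j t : y i < y j -> (i + t < N)%N -> (j + t < N)%N ->
  (forall s, s < t -> W (i + s) = W (j + s))%N -> (W (i + t) <= W (j + t))%N.
Proof.
move=> yij it jt agree; apply: (iet_in_letter_le (orbit_in it) (orbit_in jt)).
have := orbit_gap (ltnW it) (ltnW jt) agree; lra.
Qed.

Lemma orbit_succ_lt i j : (i < N)%N -> (j < N)%N ->
  ((pi^-1)%g (W i) < (pi^-1)%g (W j))%N -> y i.+1 < y j.+1.
Proof.
move=> iN jN; rewrite !orbit_step //; exact: iet_image_lt (orbit_in iN) (orbit_in jN).
Qed.

End Orbit.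
End IntervalExchange.

Section ReturnOrbit.
Variables (R : realType) (k : nat) (l : R) (lam : 'I_k -> R) (pi : {perm 'I_k}).
Hypothesis lam_gt0 : forall a, 0 < lam a.
Variables (x0 : 'I_k) (u w : seq 'I_k) (y : nat -> R).
Hypothesis w_prefix : prefix w (u ++ w).
Hypothesis no_inner_w : ~ exists p s : seq 'I_k,
  (0 < size p)%N /\ (0 < size s)%N /\ u ++ w = p ++ w ++ s.
Hypothesis y_succ : forall i, y i.+1 = iet_map l lam pi (y i).
Hypothesis y_letter : forall i, (i < size (u ++ w))%N ->
  iet_letter l lam (y i) = Some (nth x0 (u ++ w) i).

Lemma return_rot_lexlt p q : (0 < p <= size u)%N -> (0 < q <= size u)%N ->
  ((pi^-1)%g (last x0 (rot p u)) < (pi^-1)%g (last x0 (rot q u)))%N ->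
  ~~ lexle (rot q u) (rot p u).
Proof.
move=> Hp Hq; rewrite !(last_rot_return x0 w_prefix) // => key_lt.
have ne : nth x0 (u ++ w) p.-1 != nth x0 (u ++ w) q.-1.
  by apply: contraTneq key_lt => ->; rewrite ltnn.
have [t [tn pt qt agree ne_t]] := return_first_mismatch w_prefix no_inner_w Hp Hq ne.
have [p0 pn] := andP Hp; have [q0 qn] := andP Hq.
have y_lt : y p < y q.
  rewrite -(prednK p0) -(prednK q0).
  by apply: (orbit_succ_lt lam_gt0 y_succ y_letter) => //; rewrite size_cat; lia.
apply: (lexle_first_mismatch (x0 := x0) (t := t)); rewrite ?size_rot //.
  by move=> s st; rewrite !(nth_rot_return x0 w_prefix) ?agree //; lia.
rewrite !(nth_rot_return x0 w_prefix) // ltn_neqAle val_eqE ne_t.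
exact: (orbit_letter_le lam_gt0 y_succ y_letter).
Qed.

End ReturnOrbit.

Lemma map_iota_Some (T : Type) (x0 : T) (f : nat -> option T) (v : seq T) :
  [seq f i | i <- iota 0 (size v)] = map Some v ->
  forall i, (i < size v)%N -> f i = Some (nth x0 v i).
Proof.
move=> fv i iv; have := congr1 (fun s => nth None s i) fv.
by rewrite /= (nth_map 0%N) ?size_iota // nth_iota // (nth_map x0).
Qed.

Theorem theorem6p1 (R : realType) (k : nat) (l r : R) (lam : 'I_k -> R)
    (pi : {perm 'I_k})
    (Hpos : forall a : 'I_k, (0 < lam a)%R)
    (Hr : r = (l + \sum_(a < k) lam a)%R) :
  forall w u : seq 'I_k,
    iet_language l r lam pi w ->
    iet_return_word l r lam pi w u ->
    pi_clustering pi u.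
Proof.
move=> w [|x0 u'] _ [[x [_ [n coding]]] [w_prefix no_inner_w]].
  exact: pi_clustering_nil.
set u := x0 :: u' in coding w_prefix no_inner_w *; clearbody u.
pose y i := iter (n + i) (iet_map l lam pi) x.
have y_succ i : y i.+1 = iet_map l lam pi (y i) by rewrite /y addnS.
have y_letter i : (i < size (u ++ w))%N ->
    iet_letter l lam (y i) = Some (nth x0 (u ++ w) i).
  exact: (map_iota_Some x0 coding).
apply: (pi_clustering_of_rotations (x0 := x0)).
exact: (return_rot_lexlt Hpos w_prefix no_inner_w y_succ y_letter).
Qed.
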